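(* Let $a\in\mathbb F^*$. For all $u\in\mathbb F^n$ and $f\in\mathcal R$ we have $\mathfrak p_a\big(u\,M^\theta_a(\overline f)\big)=\mathfrak p_a(u)\,\overline f$. Consequently, $\mathrm{im}\,M^\theta_a(\overline f)=\mathfrak v_a(\mathcal R\overline f)$, where $\mathcal R\overline f$ is the left $\mathcal R$-submodule of $\mathcal S_a$ generated by $\overline f$.
   Context: $\mathbb F$ is a finite field, $\theta\in\mathrm{Aut}(\mathbb F)$, $\mathcal R=\mathbb F[x;\theta]$ the skew polynomial ring (elements $\sum f_ix^i$ with left coefficients, $xb=\theta(b)x$). Fix $n\in\mathbb N$. $\mathcal S_a=\mathcal R/\mathcal R(x^n-a)$ is a left $\mathcal R$-module, $\overline f$ the coset of $f$; the product $\mathfrak p_a(u)\overline f$ means $\overline{pf}$ for any representative $p$ of $\mathfrak p_a(u)$. $\mathfrak p_a:\mathbb F^n\to\mathcal S_a$, $(c_0,\dots,c_{n-1})\mapsto\overline{\sum_{i=0}^{n-1}c_ix^i}$, $\mathfrak v_a=\mathfrak p_a^{-1}$. $M^\theta_a(\overline f)$ is the $n\times n$ matrix whose row with index $i$ ($0\le i\le n-1$) is $\mathfrak v_a(\overline{x^if})$; $\mathrm{im}$ denotes row space. *)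

(* Skew polynomial ring F[x;theta] modelled on the carrier {poly F}
   (coefficient lists, left coefficients) with an explicit skew product. *)
From HB Require Import structures.
From mathcomp Require Import all_boot all_order all_algebra all_field.
From Stdlib Require Import ClassicalEpsilon.
Set Implicit Arguments. Unset Strict Implicit. Unset Printing Implicit Defensive.
Import GRing.Theory.
Local Open Scope ring_scope.

Section Skew.
Variables (F : finFieldType) (theta : {rmorphism F -> F}).

Definition thetan (i : nat) (c : F) : F := iter i theta c.

(* skew product: (sum f_i x^i)(sum g_j x^j) = sum_k (sum_{i<=k} f_i theta^i(g_{k-i})) x^k,
   from the rule x b = theta(b) x *)
Definition skmul (f g : {poly F}) : {poly F} :=
  \poly_(k < (size f + size g)) \sum_(i < k.+1) f`_i * thetan i g`_(k - i).

Variables (n : nat) (a : F).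

Definition skmod : {poly F} := 'X^n - a%:P.

(* congruence modulo the left ideal R (x^n - a): equality of cosets in S_a *)
Definition skeq (f g : {poly F}) : Prop := exists h : {poly F}, f - g = skmul h skmod.

(* p_a : F^n -> S_a (on representatives) *)
Definition pa (u : 'rV[F]_n) : {poly F} := \sum_(i < n) u 0 i *: 'X^i.

(* v_a = p_a^{-1} : S_a -> F^n, applied to the coset of g *)
Definition va (g : {poly F}) : 'rV[F]_n :=
  epsilon (inhabits (0 : 'rV[F]_n)) (fun u => skeq (pa u) g).

Definition Mta (f : {poly F}) : 'M[F]_n :=
  \matrix_(i < n, j < n) (va (skmul 'X^i f)) 0 j.

End Skew.

Arguments skeq F theta n a f g.
Arguments pa F n u.
Arguments va F theta n a g.
Arguments Mta F theta n a f.

(* [S_a] is identified with [F^n]: by left division by the monic [x^n - a], every class has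
   exactly one representative of degree [< n], so [v_a] is a well defined linear inverse of
   [p_a]. Row [j] of [M^theta_a(f)] is [v_a(x^j f)], and [x^(j+1) f = x (x^j f)], so the rows
   form the Krylov sequence of the [theta]-semilinear map "left multiplication by [x]" on
   [F^n]. Linearity of [v_a] gives [p_a(u M) = p_a(u) f]. The span of the first [n] vectors of
   a Krylov sequence contains all of them, so the row space contains every [v_a(x^j f)] and
   hence, by linearity, every [v_a(g f)]. *)

From HB Require Import structures.
From mathcomp Require Import all_boot all_order all_algebra all_field.
From Stdlib Require Import ClassicalEpsilon.
From mathcomp Require Import zify.
Set Implicit Arguments. Unset Strict Implicit. Unset Printing Implicit Defensive.
Import GRing.Theory.
Local Open Scope ring_scope.

Section SkewPolynomial.
Variables (F : finFieldType) (theta : {rmorphism F -> F}).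
Local Notation skmul := (skmul theta).
Local Notation thetan := (thetan theta).

Lemma thetan0 i : thetan i 0 = 0.
Proof. by elim: i => //= i IH; rewrite IH rmorph0. Qed.

Lemma thetan1 i : thetan i 1 = 1.
Proof. by elim: i => //= i IH; rewrite IH rmorph1. Qed.

Lemma thetanD i : {morph thetan i : x y / x + y}.
Proof. by move=> x y; elim: i => //= i IH; rewrite IH rmorphD. Qed.

Lemma coef_skmul f g k :
  (skmul f g)`_k = \sum_(i < k.+1) f`_i * thetan i g`_(k - i).
Proof.
rewrite coef_poly; case: ltnP => // le_fg_k; rewrite big1 // => i _.
have [lt_i_f|le_f_i] := ltnP i (size f); last by rewrite nth_default ?mul0r.
rewrite [g`_ _]nth_default ?thetan0 ?mulr0 //.
by move: le_fg_k; case: i lt_i_f => /= i _; move: (size f) (size g); lia.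
Qed.

Lemma skmulDl f1 f2 g : skmul (f1 + f2) g = skmul f1 g + skmul f2 g.
Proof.
apply/polyP => k; rewrite coefD !coef_skmul -big_split.
by apply: eq_bigr => i _; rewrite coefD mulrDl.
Qed.

Lemma skmulZl c f g : skmul (c *: f) g = c *: skmul f g.
Proof.
apply/polyP => k; rewrite coefZ !coef_skmul mulr_sumr.
by apply: eq_bigr => i _; rewrite coefZ mulrA.
Qed.

Lemma skmul0l g : skmul 0 g = 0.
Proof. by have := skmulZl 0 0 g; rewrite !scale0r. Qed.

Lemma skmulNl f g : skmul (- f) g = - skmul f g.
Proof. by rewrite -scaleN1r skmulZl scaleN1r. Qed.

Lemma skmul_suml (I : finType) (c : I -> F) (p : I -> {poly F}) g :
  skmul (\sum_i c i *: p i) g = \sum_i c i *: skmul (p i) g.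
Proof.
rewrite (big_morph (skmul^~ g) (fun x y => skmulDl x y g) (skmul0l g)).
by apply: eq_bigr => i _; rewrite skmulZl.
Qed.

Lemma skmulDr f g1 g2 : skmul f (g1 + g2) = skmul f g1 + skmul f g2.
Proof.
apply/polyP => k; rewrite coefD !coef_skmul -big_split.
by apply: eq_bigr => i _; rewrite coefD thetanD mulrDr.
Qed.

Lemma skmulBr f g1 g2 : skmul f (g1 - g2) = skmul f g1 - skmul f g2.
Proof. by apply: (addIr (skmul f g2)); rewrite -skmulDr !subrK. Qed.

Lemma coef_skmulXn d p k :
  (skmul 'X^d p)`_k = if (d <= k)%N then thetan d p`_(k - d) else 0.
Proof.
rewrite coef_skmul; case: ifP => le_d_k.
  rewrite (bigD1 (Ordinal (le_d_k : (d < k.+1)%N))) //= coefXn eqxx mul1r.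
  rewrite big1 ?addr0 // => i /eqP ne_i_d.
  by rewrite coefXn; case: eqP => [e|_]; [case: ne_i_d; apply: val_inj | rewrite mul0r].
rewrite big1 // => i _; rewrite coefXn; case: eqP => [e|_]; last by rewrite mul0r.
by have := ltn_ord i; rewrite e ltnS le_d_k.
Qed.

Lemma skmulX_assoc h g : skmul 'X (skmul h g) = skmul (skmul 'X h) g.
Proof.
apply/polyP => k; rewrite -['X]expr1 coef_skmulXn [RHS]coef_skmul.
case: k => [|k]; first by rewrite big_ord1 coef_skmulXn mul0r.
rewrite big_ord_recl coef_skmulXn mul0r add0r subn1 /= coef_skmul rmorph_sum.
apply: eq_bigr => i _; rewrite coef_skmulXn /= subn1 /= rmorphM.
by rewrite /bump /= add1n subSS.
Qed.

Lemma skmulX_Xn i : skmul 'X 'X^i = 'X^(i.+1).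
Proof.
apply/polyP => -[|k]; rewrite -['X]expr1 coef_skmulXn !coefXn //= subn1 eqSS.
by case: eqP; rewrite ?rmorph1 ?rmorph0.
Qed.

Lemma skmulXZ c p : skmul 'X (c *: p) = theta c *: skmul 'X p.
Proof.
apply/polyP => k; rewrite coefZ -['X]expr1 !coef_skmulXn.
by case: ifP; rewrite ?mulr0 // coefZ /= rmorphM.
Qed.

End SkewPolynomial.

Section RowPolynomial.
Variables (F : finFieldType) (n : nat).

Lemma pa_rVpoly (u : 'rV[F]_n) : pa u = rVpoly u.
Proof.
rewrite [in RHS](row_sum_delta u) linear_sum.
by apply: eq_bigr => i _; rewrite linearZ; congr (_ *: _); rewrite -rVpoly_delta.
Qed.

Lemma pa_is_semilinear : semilinear (@pa F n).
Proof. by split=> [c u|u v]; rewrite !pa_rVpoly linearE. Qed.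

Lemma size_pa (u : 'rV[F]_n) : (size (pa u) <= n)%N.
Proof. by rewrite pa_rVpoly size_poly. Qed.

HB.instance Definition _ :=
  GRing.isSemilinear.Build F 'rV[F]_n {poly F} _ (@pa F n) pa_is_semilinear.

End RowPolynomial.

Section QuotientModule.
Variables (F : finFieldType) (theta : {rmorphism F -> F}) (n : nat) (a : F).
Hypothesis n_gt0 : (0 < n)%N.
Local Notation skmul := (skmul theta).
Local Notation skmod := (skmod n a).
Local Notation skeq := (skeq theta n a).
Local Notation va := (va theta n a).
Implicit Types (g h p q : {poly F}) (u v : 'rV[F]_n).

Lemma skeq_refl p : skeq p p.
Proof. by exists 0; rewrite subrr skmul0l. Qed.

Lemma skeq_sym p q : skeq p q -> skeq q p.
Proof. by case=> h e; exists (- h); rewrite skmulNl -e opprB. Qed.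

Lemma skeq_trans p q r : skeq p q -> skeq q r -> skeq p r.
Proof. by case=> h1 e1 [h2 e2]; exists (h1 + h2); rewrite skmulDl -e1 -e2 addrA subrK. Qed.

Lemma skeq_lin c p q p' q' : skeq p q -> skeq p' q' -> skeq (c *: p + p') (c *: q + q').
Proof.
case=> h1 e1 [h2 e2]; exists (c *: h1 + h2).
by rewrite skmulDl skmulZl -e1 -e2 scalerBr opprD addrACA addrA.
Qed.

Lemma skeq_sum (I : finType) (c : I -> F) (p q : I -> {poly F}) :
  (forall i, skeq (p i) (q i)) -> skeq (\sum_i c i *: p i) (\sum_i c i *: q i).
Proof.
move=> pq; apply: (big_ind2 skeq); first exact: skeq_refl.
  by move=> p1 q1 p2 q2 e1 e2; have := skeq_lin 1 e1 e2; rewrite !scale1r.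
by move=> i _; have := skeq_lin (c i) (pq i) (skeq_refl 0); rewrite !addr0.
Qed.

Lemma skeq_mulX p q : skeq p q -> skeq (skmul 'X p) (skmul 'X q).
Proof. by case=> h e; exists (skmul 'X h); rewrite -skmulBr e skmulX_assoc. Qed.

Lemma coef_skmod j : skmod`_j = (j == n)%:R - (j == 0)%:R * a.
Proof. by rewrite coefB coefXn coefC; case: (j == 0)%N; rewrite ?mul1r ?mul0r. Qed.

(* Subtracting [lead_coef g x^(deg g - n) (x^n - a)] kills the top coefficient of [g]. *)
Lemma skeq_size_lt g : (n < size g)%N -> exists2 g', skeq g g' & (size g' < size g)%N.
Proof.
move=> lt_n_g; set s := (size g).-1; set d := (s - n)%N.
exists (g - skmul (g`_s *: 'X^d) skmod).
  by exists (g`_s *: 'X^d); rewrite opprB addrC subrK.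
have size_g : size g = s.+1 by rewrite prednK // (leq_ltn_trans _ lt_n_g).
rewrite size_g ltnS; apply/leq_sizeP => j le_s_j.
rewrite coefB skmulZl coefZ coef_skmulXn coef_skmod.
have -> : (d <= j)%N by rewrite /d; lia.
have -> : (j - d == 0)%N = false by apply/negbTE; rewrite /d; lia.
rewrite mul0r subr0; have [lt_s_j|eq_s_j] := ltnP s j.
  rewrite nth_default ?size_g //.
  have -> : (j - d == n)%N = false by apply/negbTE; rewrite /d; lia.
  by rewrite thetan0 mulr0 subrr.
have -> : j = s by apply/eqP; rewrite eqn_leq le_s_j eq_s_j.
have -> : (s - d == n)%N by apply/eqP; rewrite /d; lia.
by rewrite thetan1 mulr1 subrr.
Qed.

Lemma exists_pa_skeq g : exists u, skeq (pa u) g.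
Proof.
elim: {g}(size g).+1 {-2}g (ltnSn (size g)) => // s IH g lt_g_s.
have [le_g_n|lt_n_g] := leqP (size g) n.
  by exists (poly_rV g); rewrite pa_rVpoly poly_rV_K //; exact: skeq_refl.
have [g' gg' lt_g'_g] := skeq_size_lt lt_n_g.
have [u ug'] := IH g' (leq_trans lt_g'_g lt_g_s).
by exists u; apply: skeq_trans ug' (skeq_sym gg').
Qed.

(* The coefficient of [h (x^n - a)] in degree [deg h + n] is [lead_coef h]; for [n = 0]
   the two terms of the modulus would collide. *)
Lemma size_skmul_skmod_gt h : h != 0 -> (n < size (skmul h skmod))%N.
Proof.
move=> nz_h; set d := (size h).-1.
have size_h : size h = d.+1 by rewrite prednK // size_poly_gt0.
have lt_d : (d < (d + n).+1)%N by rewrite ltnS leq_addr.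
rewrite ltnNge; apply: contra nz_h => /leq_sizeP/(_ (d + n)%N (leq_addl _ _)).
rewrite coef_skmul (bigD1 (Ordinal lt_d)) //= big1 => [|i ne_i_d].
  rewrite addr0 coef_skmod addKn eqxx eqn0Ngt n_gt0 mul0r subr0 thetan1 mulr1 => h_d.
  by rewrite -lead_coef_eq0 lead_coefE -/d h_d.
have [lt_d_i|le_i_d] := ltnP d i; first by rewrite nth_default ?mul0r // size_h.
have lt_i_d : (i < d)%N by rewrite ltn_neqAle le_i_d andbT; exact: ne_i_d.
rewrite coef_skmod; have -> : (d + n - i == n)%N = false by apply/negbTE; lia.
have -> : (d + n - i == 0)%N = false by apply/negbTE; lia.
by rewrite mul0r subr0 thetan0 mulr0.
Qed.

Lemma pa_inj u v : skeq (pa u) (pa v) -> u = v.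
Proof.
case=> h; have [->|nz_h] := eqVneq h 0.
  by rewrite skmul0l !pa_rVpoly => /subr0_eq/(congr1 (@poly_rV F n)); rewrite !rVpolyK.
by rewrite -linearB => e; have := size_skmul_skmod_gt nz_h; rewrite -e ltnNge size_pa.
Qed.

Lemma skeq_pa_va g : skeq (pa (va g)) g.
Proof. exact: epsilon_spec (exists_pa_skeq g). Qed.

Lemma va_pa u : va (pa u) = u.
Proof. exact: pa_inj (skeq_pa_va _). Qed.

Lemma va_skeq g g' : skeq g g' -> va g = va g'.
Proof.
move=> gg'; apply: pa_inj; apply: skeq_trans (skeq_pa_va g) _.
exact: skeq_trans gg' (skeq_sym (skeq_pa_va g')).
Qed.

Lemma va_lin c g g' : va (c *: g + g') = c *: va g + va g'.
Proof.
rewrite -[RHS]va_pa; apply: va_skeq; apply: skeq_sym.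
rewrite linearP; exact: skeq_lin (skeq_pa_va _) (skeq_pa_va _).
Qed.

Lemma va0 : va 0 = 0.
Proof. by have := va_pa 0; rewrite linear0. Qed.

Lemma vaD : {morph va : g g' / g + g'}.
Proof. by move=> g g'; have := va_lin 1 g g'; rewrite !scale1r. Qed.

Lemma vaZ c g : va (c *: g) = c *: va g.
Proof. by have := va_lin c g 0; rewrite va0 !addr0. Qed.

Lemma va_sum (I : finType) (c : I -> F) (p : I -> {poly F}) :
  va (\sum_i c i *: p i) = \sum_i c i *: va (p i).
Proof. by rewrite (big_morph va vaD va0); apply: eq_bigr => i _; rewrite vaZ. Qed.

End QuotientModule.

Section KrylovSpan.
Variables (F : fieldType) (n : nat) (sigma : F -> F) (T : 'rV[F]_n -> 'rV[F]_n).
Hypothesis T_add : {morph T : u v / u + v}.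
Hypothesis T_scale : forall c u, T (c *: u) = sigma c *: T u.
Variable r : nat -> 'rV[F]_n.
Hypothesis r_succ : forall j, r j.+1 = T (r j).

Definition krylov k : 'M[F]_(k, n) := \matrix_(i < k) r i.

Lemma row_krylov k (i : 'I_k) : (r i <= krylov k)%MS.
Proof. by rewrite -[r i](rowK (fun i : 'I_k => r i)) row_sub. Qed.

Lemma krylov_mono k l : (k <= l)%N -> (krylov k <= krylov l)%MS.
Proof.
move=> le_kl; apply/row_subP => i; rewrite rowK.
exact: (row_krylov (Ordinal (leq_trans (ltn_ord i) le_kl))).
Qed.

Lemma krylov_T_stable k :
  (r k <= krylov k)%MS -> forall u, (u <= krylov k)%MS -> (T u <= krylov k)%MS.
Proof.
move=> r_k u /submxP[w ->]; rewrite mulmx_sum_row.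
have T0 : T 0 = 0 by apply: (addrI (T 0)); rewrite -T_add !addr0.
rewrite (big_morph T T_add T0); apply: summx_sub => i _.
rewrite rowK T_scale -r_succ; apply: scalemx_sub.
have [lt_i1_k|le_k_i1] := ltnP i.+1 k; first exact: (row_krylov (Ordinal lt_i1_k)).
by have -> : i.+1 = k by apply/eqP; rewrite eqn_leq le_k_i1 (ltn_ord i).
Qed.

Lemma krylov_stable k : (r k <= krylov k)%MS -> forall j, (r j <= krylov k)%MS.
Proof.
move=> r_k j; have [lt_jk|le_kj] := ltnP j k; first exact: (row_krylov (Ordinal lt_jk)).
rewrite -(subnKC le_kj); elim: (j - k)%N => [|t IH]; first by rewrite addn0.
by rewrite addnS r_succ; apply: krylov_T_stable.
Qed.

Lemma krylov_rank k :
  (forall i, (i < k)%N -> ~~ (r i <= krylov i)%MS) -> (k <= \rank (krylov k))%N.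
Proof.
elim: k => // k IH r_new; apply: leq_ltn_trans (IH (fun i lt_ik => r_new i (ltnW lt_ik))) _.
rewrite rank_ltmx // ltmxE krylov_mono //=; apply: contra (r_new k (ltnSn k)).
by apply: submx_trans; exact: (row_krylov (@ord_max k)).
Qed.

(* Either some [r k] with [k < n] already lies in the span of its predecessors, or the
   first [n] vectors are independent and span everything. *)
Lemma krylov_span j : (r j <= krylov n)%MS.
Proof.
have [/existsP[k r_k]|no_k] := boolP [exists k : 'I_n, (r k <= krylov k)%MS].
  exact: submx_trans (krylov_stable r_k j) (krylov_mono (ltnW (ltn_ord k))).
apply: submx_full; rewrite -col_leq_rank; apply: krylov_rank => i lt_in.
by apply: contra no_k => r_i; apply/existsP; exists (Ordinal lt_in).
Qed.

End KrylovSpan.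

Section MultiplicationMatrix.
Variables (F : finFieldType) (theta : {rmorphism F -> F}) (n : nat) (a : F).
Hypothesis n_gt0 : (0 < n)%N.
Variable f : {poly F}.
Local Notation skmul := (skmul theta).
Local Notation skeq := (skeq theta n a).
Local Notation va := (va theta n a).
Local Notation Mta := (Mta theta n a f).

Lemma Mta_krylov : Mta = krylov (fun j => va (skmul 'X^j f)) n.
Proof. by apply/matrixP => i j; rewrite !mxE. Qed.

Lemma va_mulXn_sub_Mta j : (va (skmul 'X^j f) <= Mta)%MS.
Proof.
rewrite Mta_krylov; apply: (@krylov_span _ _ theta (fun u => va (skmul 'X (pa u)))).
- by move=> u v; rewrite /= linearD skmulDr (vaD theta a n_gt0).
- by move=> c u; rewrite /= linearZ skmulXZ (vaZ theta a n_gt0).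
- move=> i; rewrite -(skmulX_Xn theta) -skmulX_assoc; apply: (va_skeq n_gt0).
  exact/skeq_mulX/skeq_sym/(skeq_pa_va theta a n_gt0).
Qed.

Lemma pa_mul_Mta u : skeq (pa (u *m Mta)) (skmul (pa u) f).
Proof.
rewrite Mta_krylov mulmx_sum_row linear_sum; under eq_bigr do rewrite rowK linearZ.
rewrite [pa u]/pa skmul_suml; apply: skeq_sum => i; exact: (skeq_pa_va theta a n_gt0).
Qed.

Lemma sub_Mta_va v : (v <= Mta)%MS <-> exists g : {poly F}, v = va (skmul g f).
Proof.
split=> [/submxP[w ->]|[g ->]].
  by exists (pa w); rewrite -(va_pa theta a n_gt0 (w *m _)); exact/(va_skeq n_gt0)/pa_mul_Mta.
rewrite -(coefK g) poly_def skmul_suml (va_sum theta a n_gt0).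
by apply: summx_sub => i _; apply/scalemx_sub/va_mulXn_sub_Mta.
Qed.

End MultiplicationMatrix.

Theorem proposition3p3 (F : finFieldType) (theta : {rmorphism F -> F})
  (htheta : bijective theta) (n : nat) (a : F) (ha : a != 0) :
  (forall (u : 'rV[F]_n) (f : {poly F}),
      skeq theta n a (pa (u *m Mta theta n a f)) (skmul theta (pa u) f)) /\
  (forall (f : {poly F}) (v : 'rV[F]_n),
      (v <= Mta theta n a f)%MS <->
      exists g : {poly F}, v = va theta n a (skmul theta g f)).
Proof.
case: n => [|n]; last by split=> [u f|f v]; [exact: pa_mul_Mta | exact: sub_Mta_va].
split=> [u f|f v]; first by rewrite !thinmx0 linear0 skmul0l; exact: skeq_refl.
by split=> _; [exists 0; rewrite !thinmx0 | rewrite thinmx0 sub0mx].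
Qed.
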